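(* Let $H$ be a separable infinite-dimensional complex Hilbert space and $T\in\mathcal{L}(H)$. (i) If $S\in\mathcal{L}(H)$ commutes with $T$, then $(T,ST)$ is not a universal commuting pair. In particular, $(T,p(T)T)$ is not a universal commuting pair for any complex polynomial $p(z)=a_1z+\dots+a_nz^n$ with $p(0)=0$, where $p(T)=a_1T+\dots+a_nT^n$. (ii) $(T^m,T^n)$ is not a universal commuting pair for any $m,n\in\mathbb{N}$.
   Context: A commuting pair $(U_1,U_2)\in\mathcal{L}(H)^2$ is a universal commuting pair if for every commuting pair $(S_1,S_2)\in\mathcal{L}(H)^2$ there exist a constant $c\neq0$, a closed subspace $M\subset H$ invariant under both $U_1$ and $U_2$, and a linear isomorphism $V:H\to M$ such that $U_1V=cVS_1$ and $U_2V=cVS_2$. *)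

From HB Require Import structures.
From mathcomp Require Import all_boot all_order all_algebra.
From mathcomp Require Import complex.
From mathcomp Require Import reals.
Set Implicit Arguments. Unset Strict Implicit. Unset Printing Implicit Defensive.
Import Order.TTheory GRing.Theory Num.Theory.
Local Open Scope ring_scope.

Section Hilbert.
Variable R : realType.
Local Notation C := R[i].
Variable H : lmodType C.
Variable ip : H -> H -> C.

Definition is_inner_product : Prop :=
  [/\ forall (a : C) (x y z : H), ip (a *: x + y) z = a * ip x z + ip y z,
      forall x y : H, ip y x = (ip x y)^*,
      forall x : H, 0 <= ip x x
    & forall x : H, ip x x = 0 -> x = 0].

Definition hnorm (x : H) : R := Num.sqrt (complex.Re (ip x x)).

Definition converges_to (u : nat -> H) (l : H) : Prop :=
  forall e : R, 0 < e -> exists N : nat, forall n, (N <= n)%N -> hnorm (u n - l) < e.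

Definition cauchy_seq (u : nat -> H) : Prop :=
  forall e : R, 0 < e -> exists N : nat,
    forall m n, (N <= m)%N -> (N <= n)%N -> hnorm (u m - u n) < e.

Definition complete : Prop :=
  forall u : nat -> H, cauchy_seq u -> exists l, converges_to u l.

Definition is_hilbert : Prop := is_inner_product /\ complete.

Definition separable : Prop :=
  exists d : nat -> H, forall (x : H) (e : R), 0 < e -> exists n, hnorm (x - d n) < e.

Definition infinite_dimensional : Prop :=
  forall n : nat, exists f : 'I_n -> H,
    forall c : 'I_n -> C, \sum_(i < n) c i *: f i = 0 -> forall i, c i = 0.

Definition bounded_op (T : H -> H) : Prop :=
  (forall (a : C) (x y : H), T (a *: x + y) = a *: T x + T y) /\
  exists K : R, forall x, hnorm (T x) <= K * hnorm x.

Definition closed_subspace (M : H -> Prop) : Prop :=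
  [/\ M 0,
      forall (a : C) (x y : H), M x -> M y -> M (a *: x + y)
    & forall (u : nat -> H) (l : H), (forall n, M (u n)) -> converges_to u l -> M l].

Definition commuting_pair (T1 T2 : H -> H) : Prop :=
  bounded_op T1 /\ bounded_op T2 /\ forall x, T1 (T2 x) = T2 (T1 x).

(* V : H -> M is a linear isomorphism onto M (bounded, with bounded inverse) *)
Definition lin_iso_onto (V : H -> H) (M : H -> Prop) : Prop :=
  [/\ bounded_op V,
      forall x, M (V x),
      forall y, M y -> exists x, V x = y
    & exists K : R, forall x, hnorm x <= K * hnorm (V x)].

Definition universal_commuting_pair (U1 U2 : H -> H) : Prop :=
  commuting_pair U1 U2 /\
  forall S1 S2 : H -> H, commuting_pair S1 S2 ->
    exists (c : C) (M : H -> Prop) (V : H -> H),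
      [/\ c != 0, closed_subspace M,
          (forall x, M x -> M (U1 x)) /\ (forall x, M x -> M (U2 x)),
          lin_iso_onto V M
        & (forall x, U1 (V x) = c *: V (S1 x)) /\ (forall x, U2 (V x) = c *: V (S2 x))].

Definition poly_op (p : {poly C}) (T : H -> H) (x : H) : H :=
  \sum_(i < size p) p`_i *: iter i T x.

End Hilbert.

(* A universal pair (U1, U2) must model the commuting pair (0, I): then
   U1 V = 0 and U2 V = c V with c <> 0 and V injective, so on the nonzero
   range of V the operator U1 vanishes while U2 does not. Hence ker U1 is not
   contained in ker U2 and, modelling (I, 0) instead, ker U2 is not contained
   in ker U1. For each pair of the proposition one kernel contains the other:
   ker T is inside ker (S T), ker (p(T) T) and ker p(T) when p(0) = 0, and
   ker T^m is inside ker T^n when m <= n. *)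

From HB Require Import structures.
From mathcomp Require Import all_boot all_order all_algebra.
From mathcomp Require Import complex.
From mathcomp Require Import reals.
Import Order.TTheory GRing.Theory Num.Theory.
Local Open Scope ring_scope.
Set Implicit Arguments.

Lemma linear_map0 {F : pzRingType} {U V : lmodType F} {f : U -> V} :
  (forall (a : F) (x y : U), f (a *: x + y) = a *: f x + f y) -> f 0 = 0.
Proof. by move=> /(_ (-1) 0 0); rewrite scaler0 addr0 scaleN1r addNr. Qed.

Section Hilbert.
Variable R : realType.
Local Notation C := R[i].
Variable H : lmodType C.
Variable ip : H -> H -> C.

Section InnerProduct.
Hypothesis ip_inner : is_inner_product ip.

Lemma ip0l z : ip 0 z = 0.
Proof.
case: ip_inner => /(_ 1 0 0 z) + _ _ _; rewrite scaler0 addr0 mul1r.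
by move=> ip0D; apply: (addrI (ip 0 z)); rewrite addr0.
Qed.

Lemma hnorm0 : hnorm ip 0 = 0.
Proof. by rewrite /hnorm ip0l sqrtr0. Qed.

Lemma hnorm_eq0 x : hnorm ip x = 0 -> x = 0.
Proof.
case: ip_inner => _ _ /(_ x) ip_ge0 /(_ x) ip_def.
rewrite /hnorm => /eqP; rewrite sqrtr_eq0 => Re_le0; apply: ip_def.
move: ip_ge0 Re_le0; case: (ip x x) => a b.
rewrite lecE /= => /andP[/eqP -> a_ge0] a_le0.
by apply/eqP; rewrite eq_complex /= eqxx andbT eq_le a_le0 a_ge0.
Qed.

Lemma bounded_op0 : bounded_op ip (fun _ => 0).
Proof.
split; first by move=> *; rewrite scaler0 addr0.
by exists 0 => x; rewrite mul0r hnorm0.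
Qed.

Lemma bounded_op_id : bounded_op ip id.
Proof. by split=> //; exists 1 => x; rewrite mul1r. Qed.

Lemma lin_iso_onto_inj V M x : lin_iso_onto ip V M -> V x = 0 -> x = 0.
Proof.
case=> _ _ _ [K VK] Vx0; apply: hnorm_eq0; apply/le_anti.
by rewrite sqrtr_ge0 andbT (le_trans (VK x)) // Vx0 hnorm0 mulr0.
Qed.

End InnerProduct.

Lemma commuting_pair_sym S1 S2 :
  commuting_pair ip S1 S2 -> commuting_pair ip S2 S1.
Proof. by case=> hS1 [hS2 S12]; split; last split. Qed.

Lemma universal_commuting_pair_sym U1 U2 :
  universal_commuting_pair ip U1 U2 -> universal_commuting_pair ip U2 U1.
Proof.
case=> /commuting_pair_sym hU univ; split=> // S1 S2 /commuting_pair_sym hS.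
have [c [M [V [c0 hM [MU1 MU2] hV [VU1 VU2]]]]] := univ _ _ hS.
by exists c, M, V.
Qed.

Lemma infinite_dimensional_nontrivial :
  infinite_dimensional H -> exists x : H, x != 0.
Proof.
move=> /(_ 1%N) [f f_free]; exists (f ord0); apply/eqP => f0.
have /eqP : (1 : C) = 0 by apply: (f_free (fun _ => 1) _ ord0); rewrite big_ord1 scale1r.
by rewrite oner_eq0.
Qed.

Section KernelObstruction.
Hypothesis ip_inner : is_inner_product ip.
Hypothesis H_nontrivial : exists x : H, x != 0.

Lemma not_universal_of_ker_sub U1 U2 :
  (forall x, U1 x = 0 -> U2 x = 0) -> ~ universal_commuting_pair ip U1 U2.
Proof.
move=> kerU12 [_ /(_ (fun _ => 0) id)].
case=> [|c [M [V [c0 _ _ hV [VU1 VU2]]]]].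
  by split; [exact: bounded_op0 | split; [exact: bounded_op_id |]].
have V0 : V 0 = 0 by case: hV => -[Vlin _] _ _ _; exact: linear_map0 Vlin.
have [x /eqP] := H_nontrivial; apply; apply: (lin_iso_onto_inj ip_inner _ hV).
have /esym/eqP : U2 (V x) = c *: V x := VU2 x.
by rewrite kerU12 ?VU1 ?V0 ?scaler0 // scaler_eq0 (negPf c0) => /eqP.
Qed.

Lemma not_universal_of_ker_sup U1 U2 :
  (forall x, U2 x = 0 -> U1 x = 0) -> ~ universal_commuting_pair ip U1 U2.
Proof.
by move=> /not_universal_of_ker_sub kerU21 /universal_commuting_pair_sym.
Qed.

End KernelObstruction.

Section OperatorKernels.
Variable T : H -> H.
Hypothesis T0 : T 0 = 0.

Lemma iter_op0 n : iter n T 0 = 0.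
Proof. by elim: n => //= n ->. Qed.

Lemma iter_ker_mono m n x :
  (m <= n)%N -> iter m T x = 0 -> iter n T x = 0.
Proof. by move=> /subnK <- Tmx0; rewrite iterD Tmx0 iter_op0. Qed.

Lemma poly_op0 p : poly_op p T 0 = 0.
Proof. by rewrite /poly_op big1 // => i _; rewrite iter_op0 scaler0. Qed.

Lemma poly_op_ker p x : p.[0] = 0 -> T x = 0 -> poly_op p T x = 0.
Proof.
move=> p0 Tx0; rewrite /poly_op big1 // => -[[|i] _] _ /=.
  by rewrite -horner_coef0 p0 scale0r.
by rewrite -iterS iterSr Tx0 iter_op0 scaler0.
Qed.

End OperatorKernels.
End Hilbert.

Theorem proposition4p1 (R : realType) (H : lmodType R[i]) (ip : H -> H -> R[i])
  (hH : is_hilbert ip) (hsep : separable ip) (hinf : infinite_dimensional H)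
  (T : H -> H) (hT : bounded_op ip T) :
  (* (i) *)
  (forall S : H -> H, bounded_op ip S -> (forall x, S (T x) = T (S x)) ->
     ~ universal_commuting_pair ip T (fun x => S (T x)))
  /\ (forall p : {poly R[i]}, p.[0] = 0 ->
     ~ universal_commuting_pair ip T (fun x => poly_op p T (T x))
     /\ ~ universal_commuting_pair ip T (poly_op p T))
  (* (ii) *)
  /\ (forall m n : nat, (0 < m)%N -> (0 < n)%N ->
     ~ universal_commuting_pair ip (iter m T) (iter n T)).
Proof.
have [ip_inner _] := hH.
have H_nontrivial := infinite_dimensional_nontrivial hinf.
have ker_sub := not_universal_of_ker_sub ip_inner H_nontrivial.
have ker_sup := not_universal_of_ker_sup ip_inner H_nontrivial.
have T0 : T 0 = 0 := linear_map0 hT.1.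
split; [|split].
- move=> S hS _; apply: ker_sub => x ->; exact: linear_map0 hS.1.
- move=> p p0; split; apply: ker_sub => x Tx0.
    by rewrite Tx0 poly_op0.
  exact: poly_op_ker.
- move=> m n _ _; have [mn | /ltnW nm] := leqP m n.
    by apply: ker_sub => x; apply: iter_ker_mono.
  by apply: ker_sup => x; apply: iter_ker_mono.
Qed.
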